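(* Let $H$ be a connected regular graph. Then, up to isomorphism, $\operatorname{obs}^\ast(H)=\{K_1+K_2,K_3\}$ if $H\cong K_2$; $\operatorname{obs}^\ast(H)=\{K_{n+1}\}$ if $H\cong K_n$ with $n\ne 2$; and $\operatorname{obs}^\ast(H)=\varnothing$ otherwise.
   Context: All graphs are finite, simple and loopless. $K_n$ is the complete graph on $n$ vertices and $+$ denotes disjoint union. A full-homomorphism $\varphi\colon G\to H$ is a map $V(G)\to V(H)$ such that for all $x,y\in V(G)$, $xy\in E(G)$ if and only if $\varphi(x)\varphi(y)\in E(H)$. A full $H$-colouring of $G$ is a full-homomorphism $G\to H$. A minimal $H$-obstruction is a graph $G$ that admits no full $H$-colouring while every proper induced subgraph of $G$ admits one; $\operatorname{obs}(H)$ denotes the set of minimal $H$-obstructions (up to isomorphism), and $\operatorname{obs}^\ast(H)$ the set of minimal $H$-obstructions on exactly $|V(H)|+1$ vertices. *)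

From mathcomp Require Import all_boot.
Set Implicit Arguments. Unset Strict Implicit. Unset Printing Implicit Defensive.

Record graph := Graph {
  vertex : finType;
  adj : rel vertex;
  adj_sym : symmetric adj;
  adj_irrefl : irreflexive adj }.

Arguments adj {g}.

Definition full_hom (G H : graph) (f : vertex G -> vertex H) : Prop :=
  forall x y : vertex G, adj x y = adj (f x) (f y).

Definition full_colourable (G H : graph) : Prop :=
  exists f : vertex G -> vertex H, full_hom f.

Section Induced.
Variables (G : graph) (S : {set vertex G}).
Definition induced_adj : rel {x : vertex G | x \in S} :=
  fun x y => adj (val x) (val y).
Lemma induced_adj_sym : symmetric induced_adj.
Proof. by move=> x y; rewrite /induced_adj adj_sym. Qed.
Lemma induced_adj_irrefl : irreflexive induced_adj.
Proof. by move=> x; rewrite /induced_adj adj_irrefl. Qed.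
Definition induced : graph := Graph induced_adj_sym induced_adj_irrefl.
End Induced.

Definition min_obstruction (H G : graph) : Prop :=
  ~ full_colourable G H /\
  forall S : {set vertex G}, S \proper [set: vertex G] ->
    full_colourable (induced S) H.

Definition iso (G1 G2 : graph) : Prop :=
  exists f : vertex G1 -> vertex G2, bijective f /\
    forall x y, adj x y = adj (f x) (f y).

Definition K_adj (n : nat) : rel 'I_n := fun i j => i != j.
Lemma K_adj_sym (n : nat) : symmetric (@K_adj n).
Proof. by move=> i j; rewrite /K_adj eq_sym. Qed.
Lemma K_adj_irrefl (n : nat) : irreflexive (@K_adj n).
Proof. by move=> i; rewrite /K_adj eqxx. Qed.
Definition K (n : nat) : graph := @Graph (ordinal n) (@K_adj n) (@K_adj_sym n) (@K_adj_irrefl n).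

Section Union.
Variables G1 G2 : graph.
Definition gsum_adj : rel (vertex G1 + vertex G2) :=
  fun x y => match x, y with
  | inl a, inl b => adj a b
  | inr a, inr b => adj a b
  | _, _ => false end.
Lemma gsum_adj_sym : symmetric gsum_adj.
Proof. by case=> a; case=> b //=; rewrite adj_sym. Qed.
Lemma gsum_adj_irrefl : irreflexive gsum_adj.
Proof. by case=> a /=; rewrite adj_irrefl. Qed.
Definition gsum : graph := Graph gsum_adj_sym gsum_adj_irrefl.
End Union.

Definition connected (G : graph) : Prop :=
  0 < #|vertex G| /\ forall x y : vertex G, connect adj x y.

Definition regular (G : graph) : Prop :=
  exists k, forall x : vertex G, #|[set y | adj x y]| = k.

From mathcomp Require Import all_boot zify.
From Stdlib Require Import Classical.
Set Implicit Arguments. Unset Strict Implicit. Unset Printing Implicit Defensive.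

(* Let G be a minimal H-obstruction with |G| = |H| + 1 and H k-regular.  Twins of G
   could be merged in a colouring, so G is point-determining.  Say u extends the pair
   (x, y) if N(y) = N(x) + u with u outside N(x).  If every vertex extended a pair,
   these pairs would chain into vertices of ever larger degree; hence some vertex v
   extends no pair, and then a full colouring of G - v identifies no two vertices, so
   G - v is a copy of H and every z <> v has degree k + [z ~ v].  Running the same
   count on G - z for z <> v shows that v is either adjacent to all other vertices,
   with degree k + 1, or isolated with k = 1.  In the first case H is k-regular on
   k + 1 vertices, in the second it is connected and 1-regular: either way H is
   complete, and G is the complete graph on |H| + 1 vertices or K_1 + K_2. *)

Definition nbhd (G : graph) (x : vertex G) : {set vertex G} := [set y | adj x y].

Definition complete (G : graph) : Prop := forall x y : vertex G, adj x y = (x != y).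

Definition full_on (G H : graph) (S : {set vertex G}) : Prop :=
  exists F : vertex G -> vertex H, {in S &, forall x y, adj x y = adj (F x) (F y)}.

Section FullColourings.
Variables G H : graph.

Lemma full_on_sub (S T : {set vertex G}) : S \subset T -> full_on H T -> full_on H S.
Proof. by move=> /subsetP sST [F HF]; exists F => x y xS yS; apply: HF; apply: sST. Qed.

Lemma full_colourable_induced (h0 : vertex H) (S : {set vertex G}) :
  full_colourable (induced S) H <-> full_on H S.
Proof.
split=> [[g Hg] | [F HF]]; last by exists (fun s => F (val s)) => s t; apply: HF (valP s) (valP t).
exists (fun x => odflt h0 (omap g (insub x))) => x y xS yS.
by rewrite !insubT /=; apply: (Hg (exist _ x xS) (exist _ y yS)).
Qed.

Lemma min_obstructionE (h0 : vertex H) :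
  min_obstruction H G <-> ~ full_colourable G H /\ forall v : vertex G, full_on H [set~ v].
Proof.
split=> -[nc del]; split=> //.
  by move=> v; apply/(full_colourable_induced h0)/del; rewrite -setTD properD1.
move=> S /properP [_ [v _ vS]]; apply/(full_colourable_induced h0)/(full_on_sub _ (del v)).
by apply/subsetP=> x xS; rewrite in_setC1; apply: contraTneq xS => ->.
Qed.

End FullColourings.

Lemma card_iso_K (G : graph) n : iso G (K n) -> #|vertex G| = n.
Proof. by case=> f [/bij_eq_card ->]; rewrite card_ord. Qed.

Lemma iso_complete (G : graph) n : iso G (K n) -> complete G.
Proof. by case=> f [/bij_inj f_inj Hf] x y; rewrite Hf /= /K_adj (inj_eq f_inj). Qed.

Lemma complete_iso (G : graph) : complete G -> iso G (K #|vertex G|).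
Proof.
move=> cG; exists enum_rank; split.
  by exists enum_val; [exact: enum_rankK | exact: enum_valK].
by move=> x y; rewrite cG /= /K_adj (inj_eq enum_rank_inj).
Qed.

Lemma min_obstruction_isoL (H G G' : graph) (h0 : vertex H) :
  iso G G' -> min_obstruction H G' -> min_obstruction H G.
Proof.
case=> f [[g fK gK] Hf]; rewrite !(min_obstructionE _ h0) => -[nc del]; split.
  by case=> F HF; apply: nc; exists (F \o g) => x y; rewrite -HF Hf !gK.
move=> v; have [F HF] := del (f v); exists (F \o f) => x y xv yv.
by rewrite Hf HF // in_setC1 (can_eq fK) -in_setC1.
Qed.

Lemma injective_on_into (T U : finType) (S : {set T}) (x0 : T) :
  x0 \in S -> #|S| <= #|U| -> exists f : T -> U, {in S &, injective f}.
Proof.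
move=> x0S le_SU; exists (fun x => enum_val (widen_ord le_SU (enum_rank_in x0S x))).
move=> x y xS yS /enum_val_inj /(congr1 val) /= /val_inj e.
by rewrite -(enum_rankK_in x0S xS) -(enum_rankK_in x0S yS) e.
Qed.

Lemma nbhd_complete (G : graph) (x : vertex G) : complete G -> nbhd x = [set~ x].
Proof. by move=> cG; apply/setP=> y; rewrite !inE cG eq_sym. Qed.

Lemma complete_min_obstruction (H G : graph) :
  complete H -> complete G -> 0 < #|vertex H| -> #|vertex G| = #|vertex H|.+1 ->
  min_obstruction H G.
Proof.
move=> cH cG H_gt0 cardG; have /card_gt0P [h0 _] := H_gt0.
apply/(min_obstructionE _ h0); split.
  case=> F HF; have F_inj : injective F.
    by move=> x y Fxy; apply/eqP; rewrite -[x == y]negbK -cG HF Fxy adj_irrefl.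
  by have := leq_card _ F_inj; rewrite cardG ltnn.
move=> v; have card_v : #|[set~ v]| = #|vertex H| by rewrite cardsC1 cardG.
have /card_gt0P [x0 x0v] : 0 < #|[set~ v]| by rewrite card_v.
have [F F_inj] := injective_on_into x0v (eq_leq card_v).
by exists F => x y xv yv; rewrite cG cH (inj_in_eq F_inj).
Qed.

Lemma K1_K2_min_obstruction (H : graph) :
  complete H -> #|vertex H| = 2 -> min_obstruction H (gsum (K 1) (K 2)).
Proof.
move=> cH cardH; pose h i := enum_val (cast_ord (esym cardH) i).
have h_inj : injective h by move=> i j /enum_val_inj /cast_ord_inj.
apply/(min_obstructionE _ (h ord0)); split.
  case=> F HF; have same x : F (inl ord0) = F (inr x).
    by apply/eqP; rewrite -[_ == _]negbK -cH -HF.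
  by move: (HF (inr ord0) (inr ord_max)); rewrite /= /K_adj -!same cH eqxx.
case=> [i | i].
  by exists (fun x => if x is inr j then h j else h ord0) => -[a|a] [b|b];
    rewrite !inE ?(ord1 a) ?(ord1 b) ?(ord1 i) ?eqxx //= /K_adj cH (inj_eq h_inj).
exists (fun _ => h ord0) => -[a|a] [b|b];
  rewrite !inE /= /K_adj cH eqxx ?(ord1 a) ?(ord1 b) ?eqxx //.
by move: i a b => [[|[|?]] ?] [[|[|?]] ?] [[|[|?]] ?].
Qed.

Lemma regular_complete (H : graph) k :
  (forall h : vertex H, #|nbhd h| = k) -> #|vertex H| = k.+1 -> complete H.
Proof.
move=> regH cardH x y.
have nbhd_x : nbhd x = [set~ x].
  apply/eqP; rewrite eqEcard cardsC1 cardH regH leqnn andbT.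
  by apply/subsetP=> w; rewrite !inE; apply: contraTneq => ->; rewrite adj_irrefl.
by move/setP/(_ y): nbhd_x; rewrite !inE eq_sym.
Qed.

Lemma connected_1regular_complete (H : graph) :
  connected H -> (forall h : vertex H, #|nbhd h| = 1) -> complete H.
Proof.
case=> _ conn reg1 x y; case: (eqVneq x y) => [<- | xy]; first exact: adj_irrefl.
have mate (z : vertex H) : exists z', nbhd z = [set z'] by apply/cards1P; rewrite reg1.
have [x' nbhd_x] := mate x; have [x'' nbhd_x'] := mate x'.
have xx' : adj x x' by move/setP/(_ x'): nbhd_x; rewrite !inE eqxx.
have nbhd_x'_x : nbhd x' = [set x].
  by rewrite nbhd_x'; move/setP/(_ x): nbhd_x'; rewrite !inE adj_sym xx' => /esym/eqP <-.
have edge_closed : closed adj (mem [set x; x']).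
  suff sub u w : adj u w -> u \in [set x; x'] -> w \in [set x; x'].
    by move=> u w uw; apply/idP/idP; apply: sub; rewrite // adj_sym.
  move=> uw; rewrite !inE => /orP [] /eqP eu; subst u.
    by move/setP/(_ w): nbhd_x; rewrite !inE uw => /esym ->; rewrite orbT.
  by move/setP/(_ w): nbhd_x'_x; rewrite !inE uw => /esym ->.
have := closed_connect edge_closed (conn x y).
by rewrite !inE eqxx (eq_sym y) (negbTE xy) => /esym/eqP ->.
Qed.

Lemma iso_K1_K2 (G : graph) (v : vertex G) :
  #|vertex G| = 3 -> (forall z, ~~ adj v z) ->
  (forall x y, x != v -> y != v -> adj x y = (x != y)) -> iso G (gsum (K 1) (K 2)).
Proof.
move=> cardG v_isolated Gv_complete.
have /card_gt0P [x0 x0v] : 0 < #|[set~ v]| by rewrite cardsC1 cardG.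
have le_2 : #|[set~ v]| <= #|'I_2| by rewrite cardsC1 cardG card_ord.
have [g g_inj] := injective_on_into x0v le_2.
pose f x : vertex (gsum (K 1) (K 2)) := if x == v then inl ord0 else inr (g x).
have f_inj : injective f.
  move=> x y; rewrite /f; case: (eqVneq x v) => [->|xv]; case: (eqVneq y v) => [->|yv] // [].
  by apply: g_inj; rewrite in_setC1.
exists f; split; first by apply: inj_card_bij f_inj _; rewrite cardG card_sum !card_ord.
move=> x y; rewrite /f; case: (eqVneq x v) => [->|xv]; case: (eqVneq y v) => [->|yv] /=.
- by rewrite adj_irrefl.
- by rewrite (negbTE (v_isolated y)).
- by rewrite adj_sym (negbTE (v_isolated x)).
- by rewrite Gv_complete // /K_adj (inj_in_eq g_inj) ?in_setC1.
Qed.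

Lemma complete_of_universal (G : graph) (v : vertex G) :
  (forall x y, x != v -> y != v -> adj x y = (x != y)) -> (forall z, z != v -> adj v z) ->
  complete G.
Proof.
move=> Gv_complete v_universal x y.
have [->|xv] := eqVneq x v.
  by have [->|/v_universal] := eqVneq y v; rewrite ?adj_irrefl // eq_sym.
have [->|yv] := eqVneq y v; first by rewrite adj_sym v_universal.
exact: Gv_complete.
Qed.

Section Extensions.
Variable G : graph.
Implicit Types u v w x y z : vertex G.

Definition point_determining : Prop := injective (@nbhd G).

Definition extends_by u x y : Prop :=
  [/\ adj y u, ~~ adj x u & forall w, w != u -> adj x w = adj y w].

Lemma extends_by_nadj u x y : extends_by u x y -> ~~ adj x y.
Proof.
case=> yu _ same; have yu' : y != u by apply: contraTneq yu => ->; rewrite adj_irrefl.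
by rewrite same // adj_irrefl.
Qed.

Lemma extends_by_nbhd u x y : extends_by u x y -> nbhd y = u |: nbhd x /\ u \notin nbhd x.
Proof.
case=> yu xu same; split; last by rewrite inE.
apply/setP=> w; rewrite !inE; case: (eqVneq w u) => [->|wu] /=; first by rewrite yu.
by rewrite same.
Qed.

Lemma card_nbhd_extends_by u x y : extends_by u x y -> #|nbhd y| = #|nbhd x|.+1.
Proof. by case/extends_by_nbhd=> -> xu; rewrite cardsU1 xu. Qed.

Lemma extends_by_neq u x y : extends_by u x y -> x != y.
Proof. by case=> yu xu _; apply: contraNneq xu => ->. Qed.

Lemma extends_by_upper u x y c d : extends_by u x y -> extends_by y c d -> d = u.
Proof.
move=> exy ecd; have xy := extends_by_neq exy.
case: exy ecd => yu xu same [dy cy same']; apply/eqP; apply: contraT => du.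
have xd : adj x d by rewrite same // adj_sym.
have cx : adj c x by rewrite same' // adj_sym.
have cu : c != u by apply: contraNneq xu => <-; rewrite adj_sym.
by move: cy; rewrite adj_sym -same // adj_sym cx.
Qed.

Lemma extends_by_lower u x y c d : extends_by u x y -> extends_by x c d -> c = u.
Proof.
move=> exy ecd; have xy := extends_by_neq exy.
case: exy ecd => yu xu same [dx cx same']; apply/eqP; apply: contraT => cu.
have du : d != u by apply: contraNneq xu => <-; rewrite adj_sym.
have cy : adj c y by rewrite same' 1?eq_sym // adj_sym -same // adj_sym.
by move: cx; rewrite adj_sym same // adj_sym cy.
Qed.

Lemma exists_vertex_extending_no_pair z0 : exists z, ~ exists x y, extends_by z x y.
Proof.
apply: NNPP => /not_ex_not_all ext.
have step u x y : extends_by u x y ->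
    exists u' x' y', extends_by u' x' y' /\ #|nbhd y'| = #|nbhd y|.+1.
  move=> exy; have [c [d eyc]] := ext y; have du := extends_by_upper exy eyc; subst d.
  have [c' [d' ecc']] := ext c; have c'y := extends_by_lower eyc ecc'; subst c'.
  by exists c, y, d'; rewrite (card_nbhd_extends_by ecc').
have deg_unbounded m : exists u x y, extends_by u x y /\ m <= #|nbhd y|.
  elim: m => [|m [u [x [y [exy le_m]]]]]; first by have [x [y ?]] := ext z0; exists z0, x, y.
  have [u' [x' [y' [e' deg']]]] := step u x y exy; by exists u', x', y'; rewrite deg'.
have [u [x [y [_]]]] := deg_unbounded #|vertex G|.+1.
by rewrite ltnNge max_card.
Qed.

Lemma extends_by_of_twins (pd : point_determining) z x y :
  x != y -> (forall w, w != z -> adj x w = adj y w) -> extends_by z x y \/ extends_by z y x.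
Proof.
move=> xy same; have not_twins : adj x z != adj y z.
  apply: contraNneq xy => xyz; apply/eqP/pd/setP=> w; rewrite !inE.
  by case: (eqVneq w z) => [->|/same].
case: (boolP (adj x z)) => xz; case: (boolP (adj y z)) => yz.
- by rewrite xz yz in not_twins.
- by right; split=> // w /same.
- by left.
- by rewrite (negbTE xz) (negbTE yz) in not_twins.
Qed.

Lemma card_nbhdD1 x v : #|nbhd x| = adj x v + #|nbhd x :\ v|.
Proof. by rewrite (cardsD1 v (nbhd x)) inE. Qed.

Section DegreeDichotomy.
Variables (k : nat) (v : vertex G).
Hypothesis degv : forall z, z != v -> #|nbhd z| = adj z v + k.

Lemma extends_by_degree_dichotomy z x y : z != v -> extends_by z x y ->
  (adj v z /\ #|nbhd v| = k.+1) \/ (~~ adj v z /\ #|nbhd v|.+1 = k).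
Proof.
move=> zv exy; have deg_y := card_nbhd_extends_by exy.
have nxy := extends_by_nadj exy; have xy := extends_by_neq exy.
case: exy => yz xz same.
have [exv | xv] := eqVneq x v.
  by subst x; right; split=> //; rewrite -deg_y degv 1?eq_sym // adj_sym (negbTE nxy).
have [eyv | yv] := eqVneq y v.
  by subst y; left; split=> //; rewrite deg_y degv // (negbTE nxy).
by move: deg_y; rewrite (degv yv) (degv xv) same 1?eq_sym //; lia.
Qed.

Lemma adj_of_degrees z : point_determining -> z != v ->
  (forall w, w != z -> #|nbhd w| = adj w z + k) -> adj v z /\ #|nbhd v| = k.+1.
Proof.
move=> pd zv degz; suff vz : adj v z by rewrite degz 1?eq_sym // vz.
apply: contraT => nvz; case/eqP: zv; apply: pd; apply/setP=> w; rewrite !inE.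
have [->|wv] := eqVneq w v; first by rewrite adj_irrefl adj_sym (negbTE nvz).
have [->|wz] := eqVneq w z; first by rewrite adj_irrefl (negbTE nvz).
by have := degv wv; rewrite degz // !(adj_sym w); lia.
Qed.

End DegreeDichotomy.

End Extensions.

Section Deletions.
Variables H G : graph.

Lemma min_obstruction_point_determining :
  ~ full_colourable G H -> (forall v : vertex G, full_on H [set~ v]) -> point_determining G.
Proof.
move=> nc del x y /setP twins; apply/eqP; apply: contraT => xy.
have {}twins w : adj x w = adj y w by have := twins w; rewrite !inE.
have [F HF] := del y; have xy' : x \in [set~ y] by rewrite in_setC1.
case: nc; exists (fun a => if a == y then F x else F a) => a b.
case: (eqVneq a y) => [->|ay]; case: (eqVneq b y) => [->|yb].
- by rewrite !adj_irrefl.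
- by rewrite -twins HF // in_setC1.
- by rewrite adj_sym -twins adj_sym HF // in_setC1.
- by rewrite HF // in_setC1.
Qed.

Lemma full_on_injective_or_extends (z : vertex G) (F : vertex G -> vertex H) :
  point_determining G -> {in [set~ z] &, forall x y, adj x y = adj (F x) (F y)} ->
  {in [set~ z] &, injective F} \/ exists x y, extends_by z x y.
Proof.
move=> pd HF.
case: (classic (exists x y, [/\ x \in [set~ z], y \in [set~ z], x != y & F x = F y]))
  => [[x [y [xz yz xy Fxy]]] | no_collision].
  have same w : w != z -> adj x w = adj y w.
    by rewrite -in_setC1 => wz; rewrite !HF // Fxy.
  by right; case: (extends_by_of_twins pd xy same) => ?; [exists x, y | exists y, x].
by left=> x y xz yz Fxy; apply/eqP; apply: contraT => xy; case: no_collision; exists x, y.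
Qed.

End Deletions.

Lemma card_nbhd_injective_deletion (H G : graph) k (v : vertex G) (F : vertex G -> vertex H) :
  (forall h : vertex H, #|nbhd h| = k) -> #|vertex G| = #|vertex H| + 1 ->
  {in [set~ v] &, forall x y, adj x y = adj (F x) (F y)} -> {in [set~ v] &, injective F} ->
  forall z, z != v -> #|nbhd z| = adj z v + k.
Proof.
move=> regH cardG HF F_inj z; rewrite -in_setC1 => zv.
have F_onto : F @: [set~ v] = [set: vertex H].
  by apply/eqP; rewrite eqEcard subsetT cardsT (card_in_imset F_inj) cardsC1 cardG addn1 /=.
rewrite (card_nbhdD1 z v) -(regH (F z)); congr (_ + _).
suff <- : F @: (nbhd z :\ v) = nbhd (F z).
  rewrite card_in_imset //.
  by apply: sub_in2 F_inj => w; rewrite !inE => /andP [].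
apply/setP=> h; apply/imsetP/idP => [[w] | Fz_h].
  by rewrite !inE => /andP [wv zw] ->; rewrite -HF // in_setC1.
have /imsetP [w wv eh] : h \in F @: [set~ v] by rewrite F_onto.
move: Fz_h; rewrite eh inE -HF // => zw.
by exists w; rewrite // !inE -in_setC1 wv.
Qed.

Lemma min_obstruction_universal_or_isolated (H G : graph) k :
  (forall h : vertex H, #|nbhd h| = k) -> 0 < #|vertex H| -> #|vertex G| = #|vertex H| + 1 ->
  ~ full_colourable G H -> (forall v : vertex G, full_on H [set~ v]) ->
  exists v (F : vertex G -> vertex H),
    [/\ {in [set~ v] &, forall x y, adj x y = adj (F x) (F y)},
        {in [set~ v] &, injective F} &
        ((forall z, z != v -> adj v z) /\ #|nbhd v| = k.+1) \/
        ((forall z, ~~ adj v z) /\ k = 1)].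
Proof.
move=> regH H_gt0 cardG nc del; have pd := min_obstruction_point_determining nc del.
have /card_gt0P [v0 _] : 0 < #|vertex G| by rewrite cardG addn1.
have [v no_ext] := exists_vertex_extending_no_pair v0.
have [F HF] := del v.
have F_inj : {in [set~ v] &, injective F} by case: (full_on_injective_or_extends pd HF).
have degv := card_nbhd_injective_deletion regH cardG HF F_inj.
have dichotomy (z : vertex G) : z != v ->
    (adj v z /\ #|nbhd v| = k.+1) \/ (~~ adj v z /\ #|nbhd v|.+1 = k).
  move=> zv; have [Fz HFz] := del z.
  case: (full_on_injective_or_extends pd HFz) => [Fz_inj | [x [y exy]]].
    by left; apply: (adj_of_degrees degv pd zv); apply: card_nbhd_injective_deletion HFz Fz_inj.
  exact: (extends_by_degree_dichotomy degv zv exy).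
exists v, F; split=> //.
have /card_gt0P [z] : 0 < #|[set~ v]| by rewrite cardsC1 cardG addn1.
rewrite in_setC1 => /dichotomy [[_ dv] | [_ dv]].
  by left; split=> // z' /dichotomy [[] | [_]] //; lia.
have v_isolated w : ~~ adj v w.
  have [->|/dichotomy [[_] | []] //] := eqVneq w v; first by rewrite adj_irrefl.
  by lia.
right; split=> //; suff nbhd_v : nbhd v = set0 by move: dv; rewrite nbhd_v cards0.
by apply/setP=> w; rewrite !inE (negbTE (v_isolated w)).
Qed.

Lemma min_obstruction_shape (H G : graph) :
  connected H -> regular H -> #|vertex G| = #|vertex H| + 1 -> min_obstruction H G ->
  complete H /\ exists v : vertex G,
    (forall x y, x != v -> y != v -> adj x y = (x != y)) /\
    ((forall z, z != v -> adj v z) \/ (forall z, ~~ adj v z) /\ #|vertex H| = 2).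
Proof.
move=> connH [k regH] cardG; have H_gt0 := connH.1; have /card_gt0P [h0 _] := H_gt0.
case/(min_obstructionE _ h0) => nc del.
have [v [F [HF F_inj shape]]] := min_obstruction_universal_or_isolated regH H_gt0 cardG nc del.
have cH : complete H.
  case: shape => [[v_universal deg_v] | [_ k1]].
    have nbhd_v : nbhd v = [set~ v].
      by apply/setP=> w; rewrite !inE; have [->|/v_universal] := eqVneq w v; rewrite ?adj_irrefl.
    by apply: (regular_complete regH); rewrite -deg_v nbhd_v cardsC1 cardG addn1.
  by apply: connected_1regular_complete connH _ => h; rewrite regH k1.
split=> //; exists v; split.
  by move=> x y xv yv; rewrite HF ?in_setC1 // cH (inj_in_eq F_inj) ?in_setC1.
case: shape => [[v_universal _] | [v_isolated k1]]; [by left | right; split=> //].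
by move: (regH h0); rewrite -/(nbhd h0) (nbhd_complete h0 cH) cardsC1 k1; lia.
Qed.

Theorem proposition3p4 (H : graph) :
  connected H -> regular H ->
  forall G : graph, #|vertex G| = #|vertex H| + 1 ->
    (iso H (K 2) ->
       (min_obstruction H G <-> iso G (gsum (K 1) (K 2)) \/ iso G (K 3))) /\
    (forall n, n <> 2 -> iso H (K n) ->
       (min_obstruction H G <-> iso G (K n.+1))) /\
    ((forall n, ~ iso H (K n)) -> ~ min_obstruction H G).
Proof.
move=> connH regH G cardG; have /card_gt0P [h0 _] := connH.1.
have shape := min_obstruction_shape connH regH cardG.
have iso_K_of_complete : complete G -> iso G (K #|vertex H|.+1).
  by move=> cG; rewrite -addn1 -cardG; exact: complete_iso.
split; [move=> iH | split; [move=> n n2 iH | move=> not_K]].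
- have cH := iso_complete iH; have cardH := card_iso_K iH; split.
    case/shape=> _ [v [Gv_complete [v_universal | [v_isolated _]]]].
      by right; rewrite -cardH; apply/iso_K_of_complete/(complete_of_universal Gv_complete).
    by left; apply: iso_K1_K2 v_isolated Gv_complete; rewrite cardG cardH.
  case=> iG; first exact: min_obstruction_isoL h0 iG (K1_K2_min_obstruction cH cardH).
  by apply: complete_min_obstruction cH (iso_complete iG) _ _; rewrite ?(card_iso_K iG) cardH.
- have cH := iso_complete iH; have cardH := card_iso_K iH; split.
    case/shape=> _ [v [Gv_complete [v_universal | [_ H2]]]]; last by case: n2; rewrite -cardH.
    by rewrite -cardH; apply/iso_K_of_complete/(complete_of_universal Gv_complete).
  move=> iG; apply: complete_min_obstruction cH (iso_complete iG) connH.1 _.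
  by rewrite (card_iso_K iG) cardH.
- by case/shape=> cH _; apply: (not_K #|vertex H|); exact: complete_iso.
Qed.
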